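(* Let $E\subseteq\mathbb{R}^n$ be compact. Let $S,S'$ be weight sequences with $s_k^{1/k}\to\infty$, $(s'_k)^{1/k}\to\infty$, and suppose there is $\lambda\le1$ with $2\overline{\Gamma}_{s'}(t)\le\underline{\Gamma}_s(\lambda t)$ for all $t>0$. Then there is a constant $D_1>1$ (depending on $S,S'$, $n$) such that the following holds. Let $F=(F^\alpha)_\alpha$ be a jet on $E$ for which there are $C>0$, $\rho\ge1$ with $$|F^\alpha(a)|\le C\rho^{|\alpha|}S_{|\alpha|},\qquad |(R^k_aF)^\alpha(b)|\le C\rho^{k+1}|\alpha|!\,s_{k+1}|b-a|^{k+1-|\alpha|}$$ for all $\alpha\in\mathbb{N}^n$, $k\ge|\alpha|$, $a,b\in E$. Then for all $L\ge D_1\rho$, all $x\in\mathbb{R}^n\setminus E$ and all $\alpha\in\mathbb{N}^n$, $$|(T^{2\overline{\Gamma}_{s'}(Ld(x))}_{\hat x}F)^{(\alpha)}(x)|\le C(2L)^{|\alpha|+1}S_{|\alpha|},$$ and, if $|\alpha|<2\overline{\Gamma}_{s'}(Ld(x))$, $$|(T^{2\overline{\Gamma}_{s'}(Ld(x))}_{\hat x}F)^{(\alpha)}(x)-F^\alpha(\hat x)|\le C(2L)^{|\alpha|+1}|\alpha|!\,s_{|\alpha|+1}\,d(x).$$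
   Context: A weight sequence is given by an increasing sequence $1=\sigma_0\le\sigma_1\le\cdots$ via $S_k=\sigma_0\cdots\sigma_k=k!\,s_k$, with $S_k^{1/k}\to\infty$; analogously $S'\leftrightarrow s'$. For a positive sequence $m$ with $m_0=1$, $m_k^{1/k}\to\infty$, $m_{k+1}/m_k\to\infty$: $h_m(t)=\inf_km_kt^k$, $\overline{\Gamma}_m(t)=\min\{k:h_m(t)=m_kt^k\}$, $\underline{\Gamma}_m(t)=\min\{k:m_{k+1}/m_k\ge1/t\}$ ($t>0$). A jet on $E$ is $F=(F^\alpha)_{\alpha\in\mathbb{N}^n}$, $F^\alpha\in C^0(E)$; $T^p_aF(x)=\sum_{|\alpha|\le p}\frac{(x-a)^\alpha}{\alpha!}F^\alpha(a)$; $(R^p_aF)^\alpha(x)=F^\alpha(x)-\sum_{|\beta|\le p-|\alpha|}\frac{(x-a)^\beta}{\beta!}F^{\alpha+\beta}(a)$. $d(x)=\operatorname{dist}(x,E)$ and $\hat x$ denotes any point of $E$ with $|x-\hat x|=d(x)$. *)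

From Stdlib Require Import Reals ClassicalEpsilon.
From mathcomp Require Import all_boot.

Set Implicit Arguments.
Unset Strict Implicit.

Local Open Scope R_scope.

Definition pt (n : nat) := 'I_n -> R.
Definition mindex (n : nat) := 'I_n -> nat.

Definition Rsum (T : finType) (P : pred T) (f : T -> R) : R :=
  \big[Rplus/R0]_(i : T | P i) f i.
Definition Rprod (T : finType) (f : T -> R) : R :=
  \big[Rmult/R1]_(i : T) f i.

Definition mlen n (a : mindex n) : nat := (\sum_(i < n) a i)%N.
Definition mfact n (a : mindex n) : nat := (\prod_(i < n) (a i)`!)%N.
Definition madd n (a b : mindex n) : mindex n := fun i => (a i + b i)%N.

Definition mpow n (x a : pt n) (b : mindex n) : R :=
  Rprod (fun i : 'I_n => pow (x i - a i) (b i)).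

Definition edist n (x y : pt n) : R :=
  sqrt (Rsum predT (fun i : 'I_n => Rsqr (x i - y i))).

Definition is_open_set n (U : pt n -> Prop) : Prop :=
  forall x, U x -> exists r, 0 < r /\ forall y, edist x y < r -> U y.
Definition compact_set n (E : pt n -> Prop) : Prop :=
  forall (I : Type) (U : I -> pt n -> Prop),
    (forall i, is_open_set (U i)) ->
    (forall x, E x -> exists i, U i x) ->
    exists l : list I, forall x, E x -> exists i, List.In i l /\ U i x.

Definition bigS (sigma : nat -> R) (k : nat) : R :=
  \big[Rmult/R1]_(j < k.+1) sigma j.
Definition smalls (sigma : nat -> R) (k : nat) : R :=
  bigS sigma k / INR (k`!).

Definition root_to_infty (m : nat -> R) : Prop :=
  forall M : R, exists N : nat, forall k : nat,
    (N <= k)%N -> (1 <= k)%N -> M <= Rpower (m k) (/ INR k).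

Definition weight_sequence (sigma : nat -> R) : Prop :=
  sigma 0%N = 1 /\ (forall k, sigma k <= sigma k.+1) /\ root_to_infty (bigS sigma).

Definition nat_min (P : nat -> Prop) : nat :=
  epsilon (inhabits 0%N) (fun k => P k /\ forall j, P j -> (k <= j)%N).

(* Gamma_bar_m(t) = min{k : h_m(t) = m_k t^k}, h_m(t) = inf_k m_k t^k;
   h_m(t) = m_k t^k means m_k t^k <= m_j t^j for all j. *)
Definition Gamma_bar (m : nat -> R) (t : R) : nat :=
  nat_min (fun k => forall j : nat, m k * pow t k <= m j * pow t j).

Definition Gamma_under (m : nat -> R) (t : R) : nat :=
  nat_min (fun k => / t <= m k.+1 / m k).

Definition jet (n : nat) := mindex n -> pt n -> R.

Definition jet_continuous_on n (E : pt n -> Prop) (f : pt n -> R) : Prop :=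
  forall a, E a -> forall eps, 0 < eps -> exists del, 0 < del /\
    forall b, E b -> edist b a < del -> Rabs (f b - f a) < eps.

(* (T^p_a F)^{(alpha)}(x) = sum_{|beta| <= p - |alpha|} (x-a)^beta/beta! F^{alpha+beta}(a)
   (the alpha-th derivative of the Taylor polynomial; it is 0 when |alpha| > p).
   beta ranges over multi-indices with entries <= p, filtered by |alpha|+|beta| <= p. *)
Definition taylor_deriv n (F : jet n) (p : nat) (a : pt n) (alpha : mindex n)
    (x : pt n) : R :=
  Rsum (fun b : {ffun 'I_n -> 'I_p.+1} =>
          (mlen alpha + mlen (fun i => nat_of_ord (b i)) <= p)%N)
       (fun b => let beta : mindex n := fun i => nat_of_ord (b i) in
          mpow x a beta / INR (mfact beta) * F (madd alpha beta) a).

Definition remainder n (F : jet n) (p : nat) (a : pt n) (alpha : mindex n)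
    (x : pt n) : R :=
  F alpha x - taylor_deriv F p a alpha x.

(* Only the bounds on F^β(x̂) enter.  Since (|α|+|β|)! <= 2^(|α|+|β|+n|β|) |α|! β!,
   the Taylor term (x - x̂)^β / β! F^(α+β)(x̂) is at most
   C (2ρ)^|α| |α|! s_(|α|+|β|) r^|β| with r = 2^(n+1) ρ d(x).  The degree
   p = 2 Γ̄_s'(L d) is at most Γ_s(λ L d), so s_(k+1) λ L d < s_k for k < p, and
   D1 = 4·4^n/λ gives r <= λ L d / 2.  Hence the terms decay like 2^-|β|, and the
   sum over β is at most 2^n times the bound for β = 0 (for |β| = 1 once F^α(x̂)
   is subtracted). *)

From HB Require Import structures.
From Stdlib Require Import Reals Lra Classical ClassicalEpsilon FunctionalExtensionality.
From mathcomp Require Import all_boot.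
Set Implicit Arguments.
Unset Strict Implicit.
Local Open Scope R_scope.

Lemma RplusA : associative Rplus. Proof. by move=> *; rewrite Rplus_assoc. Qed.
Lemma RmultA : associative Rmult. Proof. by move=> *; rewrite Rmult_assoc. Qed.
HB.instance Definition _ := Monoid.isComLaw.Build R R0 Rplus RplusA Rplus_comm Rplus_0_l.
HB.instance Definition _ := Monoid.isComLaw.Build R R1 Rmult RmultA Rmult_comm Rmult_1_l.
HB.instance Definition _ := Monoid.isMulLaw.Build R R0 Rmult Rmult_0_l Rmult_0_r.
HB.instance Definition _ :=
  Monoid.isAddLaw.Build R Rmult Rplus Rmult_plus_distr_r Rmult_plus_distr_l.

Lemma bin_le_exp2 n m : ('C(n, m) <= 2 ^ n)%N.
Proof.
elim: n m => [|n IH] [|m]; rewrite ?bin0 ?expn_gt0 ?bin0n //.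
by rewrite binS expnS mul2n -addnn leq_add.
Qed.

Lemma fact_addn_le m k : ((m + k)`! <= 2 ^ (m + k) * (m`! * k`!))%N.
Proof.
rewrite -{1}(bin_fact (leq_addr k m)) addKn.
by rewrite leq_mul2r bin_le_exp2 orbT.
Qed.

Lemma fact_sum_le n (f : 'I_n -> nat) :
  ((\sum_(i < n) f i)`! <= 2 ^ (n * \sum_(i < n) f i) * \prod_(i < n) (f i)`!)%N.
Proof.
elim: n f => [|n IH] f; first by rewrite !big_ord0.
rewrite !big_ord_recr /=.
set A := (\sum_(i < n) _)%N; set B := f ord_max.
have IHA := IH (fun i => f (widen_ord (leqnSn n) i)); rewrite -/A in IHA.
apply: (leq_trans (fact_addn_le A B)).
rewrite mulnA [X in (_ <= X)%N]mulnA leq_mul2r; apply/orP; right.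
apply: (leq_trans (leq_mul (leqnn _) IHA)).
rewrite mulnA -expnD leq_mul2r leq_exp2l //; apply/orP; right.
by rewrite mulSn mulnDr addnA leq_addr.
Qed.

Lemma Rsum_abs_le (T : finType) (P : pred T) (f g : T -> R) :
  (forall i, P i -> Rabs (f i) <= g i) -> Rabs (Rsum P f) <= Rsum P g.
Proof.
move=> fg; apply: (big_ind2 (fun u v => Rabs u <= v)) => //.
- by rewrite Rabs_R0; apply: Rle_refl.
- move=> u1 v1 u2 v2 h1 h2; have := Rabs_triang u1 u2; lra.
Qed.

Lemma Rsum_le_predT (T : finType) (P : pred T) (g : T -> R) :
  (forall i, 0 <= g i) -> Rsum P g <= Rsum predT g.
Proof.
move=> g_ge0; rewrite /Rsum big_mkcond.
apply: (big_ind2 (fun u v => u <= v)) => [|u1 v1 u2 v2 /= ? ?|i _]; try lra.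
by case: (P i); [lra | exact: g_ge0].
Qed.

Lemma Rprod_le n (f g : 'I_n -> R) :
  (forall i, 0 <= f i <= g i) -> Rprod f <= Rprod g.
Proof.
move=> fg; suff [] : 0 <= Rprod f <= Rprod g by [].
apply: (big_ind2 (fun u v => 0 <= u <= v)) => [|u1 v1 u2 v2 h1 h2|i _]; last exact: fg.
- lra.
- split; [nra | apply: Rmult_le_compat; lra].
Qed.

Lemma Rabs_Rprod n (f : 'I_n -> R) : Rabs (Rprod f) = Rprod (fun i => Rabs (f i)).
Proof. exact: (big_morph Rabs Rabs_mult Rabs_R1). Qed.

Lemma Rprod_pow n (c : R) (f : 'I_n -> nat) :
  Rprod (fun i => pow c (f i)) = pow c (\sum_(i < n) f i)%N.
Proof. by symmetry; apply: (big_morph (pow c) (pow_add c)). Qed.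

Lemma Rprod_const n (c : R) : Rprod (fun _ : 'I_n => c) = pow c n.
Proof. by rewrite /Rprod big_const_ord; elim: n => //= n ->. Qed.

Lemma sum_pow_half p : \big[Rplus/R0]_(m < p) pow (/2) m = 2 - 2 * pow (/2) p.
Proof.
elim: p => [|p IH]; first by rewrite big_ord0 /=; lra.
by rewrite big_ord_recr IH /=; lra.
Qed.

Definition ffun_mindex n p (b : {ffun 'I_n -> 'I_p}) : mindex n := fun i => b i.

Lemma Rsum_ffun_half_geometric n p (P : pred {ffun 'I_n -> 'I_p}) f K :
  0 <= K -> (forall b, P b -> Rabs (f b) <= K * pow (/2) (mlen (ffun_mindex b))) ->
  Rabs (Rsum P f) <= K * pow 2 n.
Proof.
move=> K_ge0 f_le; apply: Rle_trans (Rsum_abs_le f_le) _.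
apply: Rle_trans (Rsum_le_predT _ _) _ => [b|].
  by apply: Rmult_le_pos => //; apply: pow_le; lra.
rewrite /Rsum -big_distrr /=; apply: Rmult_le_compat_l => //.
under eq_bigr => b _ do rewrite -Rprod_pow.
rewrite /Rprod -(bigA_distr_bigA (fun (i : 'I_n) (j : 'I_p) => pow (/2) j)).
rewrite -Rprod_const; apply: Rprod_le => i; rewrite sum_pow_half.
have : pow (/2) p <= pow 1 p by apply: pow_incr; lra.
have := pow_le (/2) p; rewrite pow1; lra.
Qed.

Lemma coord_le_edist n (x y : pt n) i : Rabs (x i - y i) <= edist x y.
Proof.
rewrite /edist -sqrt_Rsqr_abs; apply: sqrt_le_1_alt.
rewrite /Rsum (bigD1 i) //= -{1}(Rplus_0_r (Rsqr _)); apply: Rplus_le_compat_l.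
by apply: (big_ind (fun u => 0 <= u)) => [|u v /= ? ?|j _]; [lra | lra | exact: Rle_0_sqr].
Qed.

Lemma edist_gt0 n (x y : pt n) : x <> y -> 0 < edist x y.
Proof.
move=> xy; case: (Rle_lt_or_eq_dec 0 (edist x y) (sqrt_pos _)) => // dxy0; case: xy.
apply: functional_extensionality => i; apply: Rminus_diag_uniq.
apply: NNPP => /Rabs_no_R0; have := Rabs_pos (x i - y i).
have := coord_le_edist x y i; rewrite -dxy0; lra.
Qed.

Lemma nat_min_le (P : nat -> Prop) j : P j -> (nat_min P <= j)%N.
Proof.
move=> Pj; have least : exists k, P k /\ forall i, P i -> (k <= i)%N.
  elim/ltn_ind: j Pj => j IH Pj.
  case: (classic (exists2 i, P i & (i < j)%N)) => [[i Pi ij] | no_smaller].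
    exact: IH Pi.
  exists j; split=> // i Pi; rewrite leqNgt; apply/negP => ij.
  by apply: no_smaller; exists i.
by have [_ ->] := epsilon_spec (inhabits 0%N) _ least.
Qed.

(* Holds even when [nat_min] returns a junk value: a k violating the conclusion
   would itself witness the defining condition, forcing [Gamma_under m t <= k]. *)
Lemma Gamma_under_ratio (m : nat -> R) t k :
  (forall k, 0 < m k) -> 0 < t -> (k < Gamma_under m t)%N -> m k.+1 * t < m k.
Proof.
move=> m_gt0 t_gt0 k_lt; apply: Rnot_le_lt => m_le.
suff ratio_ge : / t <= m k.+1 / m k.
  by have := @nat_min_le (fun k => / t <= m k.+1 / m k) k ratio_ge; rewrite leqNgt k_lt.
have mk_gt0 := m_gt0 k.
have scale_ge0 : 0 <= / t * / m k.
  by apply: Rlt_le; apply: Rmult_lt_0_compat; apply: Rinv_0_lt_compat.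
have := Rmult_le_compat_r _ _ _ scale_ge0 m_le.
have -> : m k * (/ t * / m k) = / t by field; lra.
by have -> : m k.+1 * t * (/ t * / m k) = m k.+1 / m k by field; lra.
Qed.

Lemma ratio_decay_half (s : nat -> R) t r G :
  (forall k, 0 <= s k) -> 0 <= r -> r <= t / 2 ->
  (forall k, (k < G)%N -> s k.+1 * t < s k) ->
  forall m i, (m + i <= G)%N -> s (m + i)%N * pow r i <= s m * pow (/2) i.
Proof.
move=> s_ge0 r_ge0 r_le ratio m; elim=> [|i IH] mi_le; first by rewrite addn0 /=; lra.
have mi_lt : (m + i < G)%N by rewrite -addnS.
have step : s (m + i).+1 * r <= s (m + i)%N / 2.
  have := ratio _ mi_lt; have := s_ge0 (m + i).+1; nra.
have := IH (ltnW mi_lt); have := pow_le r i r_ge0.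
rewrite addnS /=; nra.
Qed.

Lemma bigS_gt0 sigma : weight_sequence sigma -> forall k, 0 < bigS sigma k.
Proof.
move=> [sigma0 [sigma_incr _]] k.
have sigma_ge1 : forall j, 1 <= sigma j.
  by elim=> [|j IH]; [rewrite sigma0; lra | have := sigma_incr j; lra].
apply: (big_ind (fun u => 0 < u)) => [|u v /= ? ?|j _]; [lra | nra |].
by have := sigma_ge1 j; lra.
Qed.

Lemma smalls_gt0 sigma : weight_sequence sigma -> forall k, 0 < smalls sigma k.
Proof.
move=> sigma_w k; apply: Rdiv_lt_0_compat; first exact: bigS_gt0.
by apply: lt_0_INR; apply/ltP; exact: fact_gt0.
Qed.

Lemma bigS_smalls sigma k : bigS sigma k = INR (k`!) * smalls sigma k.
Proof.
rewrite /smalls; field; apply: not_0_INR; apply/eqP; rewrite -lt0n; exact: fact_gt0.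
Qed.

Definition taylor_term n (F : jet n) (a : pt n) (alpha beta : mindex n) (x : pt n) : R :=
  mpow x a beta / INR (mfact beta) * F (madd alpha beta) a.

Lemma taylor_derivE n (F : jet n) p a alpha x :
  taylor_deriv F p a alpha x =
  Rsum (fun b : {ffun 'I_n -> 'I_p.+1} => (mlen alpha + mlen (ffun_mindex b) <= p)%N)
       (fun b => taylor_term F a alpha (ffun_mindex b) x).
Proof. by []. Qed.

Lemma taylor_term0 n (F : jet n) a alpha x : taylor_term F a alpha (fun _ => 0%N) x = F alpha a.
Proof.
rewrite /taylor_term; have -> : madd alpha (fun _ => 0%N) = alpha.
  by apply: functional_extensionality => i; rewrite /madd addn0.
rewrite /mfact /mpow /Rprod !big1 //=; lra.
Qed.

Lemma mlen_ffun_mindex_gt0 n p (b : {ffun 'I_n -> 'I_p.+1}) :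
  b != [ffun=> ord0] -> (0 < mlen (ffun_mindex b))%N.
Proof.
apply: contraR; rewrite -leqNgt leqn0 => /eqP mlen0; apply/eqP/ffunP => i.
apply: val_inj; rewrite ffunE /=; apply/eqP; rewrite -leqn0 -mlen0.
by rewrite /mlen (bigD1 i) //= leq_addr.
Qed.

Lemma mlen_madd n (a b : mindex n) : mlen (madd a b) = (mlen a + mlen b)%N.
Proof. exact: big_split. Qed.

Lemma mpow_abs_le n (x a : pt n) d (beta : mindex n) :
  (forall i, Rabs (x i - a i) <= d) -> Rabs (mpow x a beta) <= pow d (mlen beta).
Proof.
move=> coord_le; rewrite /mpow /mlen -Rprod_pow Rabs_Rprod; apply: Rprod_le => i.
rewrite -RPow_abs; split; first exact: pow_le (Rabs_pos _).
by apply: pow_incr; split; [exact: Rabs_pos | exact: coord_le].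
Qed.

Lemma fact_mlen_le n k (beta : mindex n) :
  INR ((k + mlen beta)`!)
  <= pow 2 (k + mlen beta) * pow (pow 2 n) (mlen beta) * INR (k`!) * INR (mfact beta).
Proof.
have INR_exp2 m : INR (2 ^ m) = pow 2 m.
  by elim: m => [|m IH] //; rewrite expnS mult_INR IH.
have := fact_sum_le beta; rewrite -/(mlen beta) -/(mfact beta) => fact_beta.
have /leP/le_INR := leq_trans (fact_addn_le k (mlen beta)) (leq_mul (leqnn _) (leq_mul (leqnn _) fact_beta)).
by rewrite !mult_INR !INR_exp2 pow_mult; lra.
Qed.

Section TaylorTerms.

Variables (n : nat) (sigma : nat -> R) (F : jet n) (C rho : R) (a x : pt n) (alpha : mindex n).
Hypotheses (sigma_w : weight_sequence sigma) (C_gt0 : 0 < C) (rho_ge1 : 1 <= rho).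
Hypothesis F_bound :
  forall beta, Rabs (F beta a) <= C * pow rho (mlen beta) * bigS sigma (mlen beta).

Let r := pow 2 n.+1 * rho * edist x a.

Lemma taylor_term_bound beta :
  Rabs (taylor_term F a alpha beta x)
  <= C * pow (2 * rho) (mlen alpha) * INR ((mlen alpha)`!)
     * smalls sigma (mlen alpha + mlen beta) * pow r (mlen beta).
Proof.
have := F_bound (madd alpha beta); rewrite mlen_madd bigS_smalls.
have := mpow_abs_le beta (coord_le_edist x a).
have := fact_mlen_le (mlen alpha) beta.
rewrite /taylor_term /r; set k := mlen alpha; set j := mlen beta.
set mf := INR (mfact beta); set Y := pow 2 (k + j) * pow (pow 2 n) j * INR (k`!).
move=> fact_le mpow_le F_le.
have mf_gt0 : 0 < mf.
  by apply: lt_0_INR; apply/ltP; apply: prodn_gt0 => i; exact: fact_gt0.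
have s_gt0 := smalls_gt0 sigma_w (k + j).
have rho_pow_gt0 : 0 < pow rho (k + j) by apply: pow_lt; lra.
rewrite /Rdiv !Rabs_mult Rabs_inv (Rabs_pos_eq mf); last lra.
apply: (Rle_trans _ (pow (edist x a) j * / mf * (C * pow rho (k + j) * (Y * mf * smalls sigma (k + j))))).
  apply: Rmult_le_compat.
  - by apply: Rmult_le_pos; [exact: Rabs_pos | apply: Rlt_le; exact: Rinv_0_lt_compat].
  - exact: Rabs_pos.
  - by apply: Rmult_le_compat_r; [apply: Rlt_le; exact: Rinv_0_lt_compat | exact: mpow_le].
  - apply: Rle_trans F_le _; apply: Rmult_le_compat_l; first nra.
    by apply: Rmult_le_compat_r; lra.
right; rewrite -[pow 2 n.+1]/(2 * pow 2 n) /Y !pow_add !Rpow_mult_distr.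
by field; lra.
Qed.

Let r_ge0 : 0 <= r.
Proof.
by apply: Rmult_le_pos; [apply: Rmult_le_pos; [apply: pow_le|] | apply: sqrt_pos]; lra.
Qed.

Let K_ge0 : 0 <= C * pow (2 * rho) (mlen alpha) * INR ((mlen alpha)`!).
Proof. by apply: Rmult_le_pos; [apply: Rmult_le_pos; [|apply: pow_le] | apply: pos_INR]; lra. Qed.

Variables (t : R) (G : nat).
Hypothesis ratio_lt : forall k, (k < G)%N -> smalls sigma k.+1 * t < smalls sigma k.
Hypothesis r_le : r <= t / 2.

Let decay := ratio_decay_half (fun k => Rlt_le _ _ (smalls_gt0 sigma_w k)) r_ge0 r_le ratio_lt.

Lemma taylor_term_decay beta : (mlen alpha + mlen beta <= G)%N ->
  Rabs (taylor_term F a alpha beta x)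
  <= C * pow (2 * rho) (mlen alpha) * bigS sigma (mlen alpha) * pow (/2) (mlen beta).
Proof.
move=> le_G; apply: Rle_trans (taylor_term_bound beta) _; rewrite bigS_smalls.
have := Rmult_le_compat_l _ _ _ K_ge0 (decay le_G); lra.
Qed.

Lemma taylor_term_decay_succ beta : (0 < mlen beta)%N -> (mlen alpha + mlen beta <= G)%N ->
  Rabs (taylor_term F a alpha beta x)
  <= 2 * r * (C * pow (2 * rho) (mlen alpha) * INR ((mlen alpha)`!)
              * smalls sigma (mlen alpha).+1) * pow (/2) (mlen beta).
Proof.
move=> beta_gt0 le_G; apply: Rle_trans (taylor_term_bound beta) _; move: le_G.
case: (mlen beta) beta_gt0 => // j _; rewrite addnS -addSn => le_G.
have := Rmult_le_compat_l _ _ _ (Rmult_le_pos _ _ K_ge0 r_ge0) (decay le_G).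
rewrite /=; lra.
Qed.

Lemma taylor_deriv_bound p : (p <= G)%N ->
  Rabs (taylor_deriv F p a alpha x)
  <= C * pow (2 * rho) (mlen alpha) * bigS sigma (mlen alpha) * pow 2 n.
Proof.
move=> le_G; rewrite taylor_derivE; apply: Rsum_ffun_half_geometric => [|b le_p].
  apply: Rlt_le; apply: Rmult_lt_0_compat; last exact: bigS_gt0.
  by apply: Rmult_lt_0_compat => //; apply: pow_lt; lra.
by apply: taylor_term_decay; apply: leq_trans le_p le_G.
Qed.

Lemma taylor_deriv_sub_bound p : (mlen alpha < p)%N -> (p <= G)%N ->
  Rabs (taylor_deriv F p a alpha x - F alpha a)
  <= 2 * r * (C * pow (2 * rho) (mlen alpha) * INR ((mlen alpha)`!)
              * smalls sigma (mlen alpha).+1) * pow 2 n.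
Proof.
move=> lt_p le_G.
have mindex0 : ffun_mindex ([ffun=> ord0] : {ffun 'I_n -> 'I_p.+1}) = fun _ => 0%N.
  by apply: functional_extensionality => i; rewrite /ffun_mindex ffunE.
rewrite taylor_derivE /Rsum (bigD1 [ffun=> ord0]) /=; last first.
  have mlen0 : mlen (fun _ : 'I_n => 0%N) = 0%N by rewrite /mlen big1.
  by rewrite mindex0 mlen0 addn0 ltnW.
rewrite mindex0 taylor_term0.
rewrite Rplus_comm /Rminus Rplus_assoc Rplus_opp_r Rplus_0_r.
apply: Rsum_ffun_half_geometric => [|b /andP[le_p b_ne0]].
  by apply: Rmult_le_pos; [lra | apply: Rmult_le_pos => //; apply: Rlt_le; exact: smalls_gt0].
apply: taylor_term_decay_succ; first exact: mlen_ffun_mindex_gt0.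
exact: leq_trans le_p le_G.
Qed.

End TaylorTerms.

Lemma pow_mul_le_pow_succ u v c k : 0 <= u <= v -> 0 <= c <= v -> pow u k * c <= pow v k.+1.
Proof.
move=> uv cv; rewrite /= Rmult_comm.
by apply: Rmult_le_compat; [lra | apply: pow_le; lra | lra | apply: pow_incr].
Qed.

Lemma taylor_deriv_estimates n sigma (F : jet n) C rho (a x : pt n) alpha lam L p :
  weight_sequence sigma -> 0 < C -> 1 <= rho ->
  (forall beta, Rabs (F beta a) <= C * pow rho (mlen beta) * bigS sigma (mlen beta)) ->
  0 < lam <= 1 -> 4 * pow 4 n * rho <= lam * L -> x <> a ->
  (p <= Gamma_under (smalls sigma) (lam * (L * edist x a)))%N ->
  Rabs (taylor_deriv F p a alpha x)
    <= C * pow (2 * L) (mlen alpha).+1 * bigS sigma (mlen alpha)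
  /\ ((mlen alpha < p)%N ->
      Rabs (taylor_deriv F p a alpha x - F alpha a)
        <= C * pow (2 * L) (mlen alpha).+1 * INR ((mlen alpha)`!)
           * smalls sigma (mlen alpha).+1 * edist x a).
Proof.
move=> sigma_w C_gt0 rho_ge1 F_bound lam_bounds L_big x_ne le_G.
set d := edist x a; have d_gt0 : 0 < d := edist_gt0 x_ne.
have pow4 : pow 4 n = pow 2 n * pow 2 n by rewrite -Rpow_mult_distr; congr pow; lra.
have pow2_ge1 : 1 <= pow 2 n by apply: pow_R1_Rle; lra.
have pow2_le_pow4 : pow 2 n <= pow 4 n by rewrite pow4; nra.
have L_gt0 : 0 < L by nra.
have L_ge : 4 * pow 4 n * rho <= L by nra.
have t_gt0 : 0 < lam * (L * d) by apply: Rmult_lt_0_compat; nra.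
have ratio k := @Gamma_under_ratio (smalls sigma) _ k (smalls_gt0 sigma_w) t_gt0.
have r_le : pow 2 n.+1 * rho * d <= lam * (L * d) / 2.
  have : 4 * pow 2 n * rho <= lam * L by nra.
  move/(Rmult_le_compat_r d _ _ (Rlt_le _ _ d_gt0)).
  rewrite -[pow 2 n.+1]/(2 * pow 2 n); lra.
split.
- apply: Rle_trans (taylor_deriv_bound alpha sigma_w C_gt0 rho_ge1 F_bound ratio r_le le_G) _.
  have growth : pow (2 * rho) (mlen alpha) * pow 2 n <= pow (2 * L) (mlen alpha).+1.
    by apply: pow_mul_le_pow_succ; nra.
  have CS_ge0 : 0 <= C * bigS sigma (mlen alpha).
    by apply: Rmult_le_pos; [lra | apply: Rlt_le; exact: bigS_gt0].
  have := Rmult_le_compat_l _ _ _ CS_ge0 growth; lra.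
- move=> lt_p.
  apply: Rle_trans (taylor_deriv_sub_bound sigma_w C_gt0 rho_ge1 F_bound ratio r_le lt_p le_G) _.
  have growth : pow (2 * rho) (mlen alpha) * (4 * pow 4 n * rho) <= pow (2 * L) (mlen alpha).+1.
    by apply: pow_mul_le_pow_succ; nra.
  have K_ge0 : 0 <= C * INR ((mlen alpha)`!) * smalls sigma (mlen alpha).+1 * d.
    apply: Rmult_le_pos; last lra; apply: Rmult_le_pos; last exact: Rlt_le (smalls_gt0 _ _).
    by apply: Rmult_le_pos; [lra | exact: pos_INR].
  have := Rmult_le_compat_l _ _ _ K_ge0 growth.
  rewrite -/d -[pow 2 n.+1]/(2 * pow 2 n) pow4; lra.
Qed.

Theorem lemma5p2 (n : nat) (sigma sigma' : nat -> R) :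
  weight_sequence sigma -> weight_sequence sigma' ->
  root_to_infty (smalls sigma) -> root_to_infty (smalls sigma') ->
  (exists lambda : R, 0 < lambda /\ lambda <= 1 /\
     forall t : R, 0 < t ->
       (2 * Gamma_bar (smalls sigma') t <= Gamma_under (smalls sigma) (lambda * t))%N) ->
  exists D1 : R, 1 < D1 /\
  forall (E : pt n -> Prop), compact_set E ->
  forall (F : jet n) (C rho : R),
    (forall alpha, jet_continuous_on E (F alpha)) ->
    0 < C -> 1 <= rho ->
    (forall (alpha : mindex n) (a : pt n), E a ->
       Rabs (F alpha a) <= C * pow rho (mlen alpha) * bigS sigma (mlen alpha)) ->
    (forall (alpha : mindex n) (k : nat) (a b : pt n),
       (mlen alpha <= k)%N -> E a -> E b ->
       Rabs (remainder F k a alpha b)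
         <= C * pow rho k.+1 * INR ((mlen alpha)`!) * smalls sigma k.+1
              * pow (edist b a) (k.+1 - mlen alpha)) ->
    forall (L : R), D1 * rho <= L ->
    forall (x xh : pt n), ~ E x -> E xh ->
      (forall y, E y -> edist x xh <= edist x y) ->
      let d := edist x xh in
      let p := (2 * Gamma_bar (smalls sigma') (L * d))%N in
      forall alpha : mindex n,
        Rabs (taylor_deriv F p xh alpha x)
          <= C * pow (2 * L) (mlen alpha).+1 * bigS sigma (mlen alpha)
        /\ ((mlen alpha < p)%N ->
            Rabs (taylor_deriv F p xh alpha x - F alpha xh)
              <= C * pow (2 * L) (mlen alpha).+1 * INR ((mlen alpha)`!)
                   * smalls sigma (mlen alpha).+1 * d).
Proof.
move=> sigma_w _ _ _ [lam [lam_gt0 [lam_le1 Gamma_le]]].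
have pow4_ge1 : 1 <= pow 4 n by apply: pow_R1_Rle; lra.
have lam_inv_ge1 : 1 <= / lam by rewrite -Rinv_1; apply: Rinv_le_contravar.
exists (4 * pow 4 n / lam); split; first by rewrite /Rdiv; nra.
move=> E _ F C rho _ C_gt0 rho_ge1 F_bound _ L L_ge x xh x_notin xh_in _ d p alpha.
have x_ne : x <> xh by move=> x_xh; apply: x_notin; rewrite x_xh.
have d_gt0 : 0 < d := edist_gt0 x_ne.
have L_big : 4 * pow 4 n * rho <= lam * L.
  have := Rmult_le_compat_l _ _ _ (Rlt_le _ _ lam_gt0) L_ge.
  by have -> : lam * (4 * pow 4 n / lam * rho) = 4 * pow 4 n * rho by field; lra.
have rho4_ge1 : 1 <= pow 4 n * rho by nra.
have L_gt0 : 0 < L by nra.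
have le_G : (p <= Gamma_under (smalls sigma) (lam * (L * d)))%N.
  by apply: Gamma_le; apply: Rmult_lt_0_compat.
by apply: taylor_deriv_estimates (fun beta => F_bound beta xh xh_in) _ L_big x_ne le_G.
Qed.
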